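(* For $0<\alpha\le\delta<\infty$, the space $P_{\alpha,\delta}=\{p\in\mathcal M_1^+: a(p)\in X_{\alpha,\delta}\}$, equipped with the metric induced by the total variation norm $\|p-q\|_1=\sum_k|p_k-q_k|$, is compact and convex.
   Context: $\mathcal M_1^+$ is the set of probability measures on $\mathbb N_0$, identified with nonnegative sequences summing to $1$. For $p\in\mathcal M_1^+$, $a(p)_k=\frac{1}{k+1}\sum_{\ell\ge k}\binom{\ell}{k}p_\ell\in[0,\infty]$. $X_{\alpha,\delta}$ is the set of real sequences $a=(a_k)_{k\ge0}$ with $a_0=1$, $a_1=\alpha$, $0\le a_k\le\delta^k$ for $k\ge2$. *)

From Stdlib Require Import Reals Lra List.
From Coquelicot Require Import Coquelicot.
Open Scope R_scope.

(* Probability measures on N_0, identified with nonnegative sequences summing to 1. *)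
Definition prob (p : nat -> R) : Prop :=
  (forall k, 0 <= p k) /\ is_series p 1.

(* a(p)_k = 1/(k+1) * sum_{l >= k} C(l,k) p_l  in [0, +oo]
   (index l = j + k; the partial sums are nondecreasing for p >= 0,
    so Lim_seq is their supremum in Rbar). *)
Definition a_of (p : nat -> R) (k : nat) : Rbar :=
  Rbar_mult (Finite (/ (INR k + 1)))
    (Lim_seq (sum_n (fun j => Binomial.C (j + k)%nat k * p (j + k)%nat))).

Definition in_X (alpha delta : R) (a : nat -> Rbar) : Prop :=
  a 0%nat = Finite 1 /\ a 1%nat = Finite alpha /\
  (forall k, (2 <= k)%nat -> Rbar_le (Finite 0) (a k) /\ Rbar_le (a k) (Finite (delta ^ k))).

Definition P_ad (alpha delta : R) (p : nat -> R) : Prop :=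
  prob p /\ in_X alpha delta (a_of p).

Definition l1ball (p : nat -> R) (eps : R) (q : nat -> R) : Prop :=
  exists s, is_series (fun k => Rabs (p k - q k)) s /\ s < eps.

Definition l1_open (U : (nat -> R) -> Prop) : Prop :=
  forall p, U p -> exists eps, 0 < eps /\ forall q, l1ball p eps q -> U q.

Definition l1_compact (S : (nat -> R) -> Prop) : Prop :=
  forall (I : Type) (U : I -> (nat -> R) -> Prop),
    (forall i, l1_open (U i)) ->
    (forall p, S p -> exists i, U i p) ->
    exists l : list I, forall p, S p -> exists i, In i l /\ U i p.

Definition convex_set (S : (nat -> R) -> Prop) : Prop :=
  forall p q t, S p -> S q -> 0 <= t <= 1 -> S (fun k => t * p k + (1 - t) * q k).

From Stdlib Require Import Reals Lra Lia FunctionalExtensionality PropExtensionality.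
From Coquelicot Require Import Coquelicot.
From HB Require Import structures.
From mathcomp Require all_boot all_order all_algebra all_classical all_reals.
From mathcomp Require topology normedtype Rstruct Rstruct_topology.
Open Scope R_scope.

(** Writing [B_k(p) = sum_l C(l,k) p_l = (k+1) a(p)_k] for the binomial moments,
    [P_{alpha,delta}] is the set of probability vectors with [B_0 = 1],
    [B_1 = 2 alpha] and [B_k <= (k+1) delta^k] for [k >= 2]; these conditions are
    linear, hence convex.  For compactness, [P_{alpha,delta}] lies in the
    Tychonoff cube [[0,1]^N].  Since [C(l,k) <= (k+1)/(M+1) C(l,k+1)] for [l > M+k],
    the bound on [B_{k+1}] controls the tail of [B_k] uniformly:
    [B_k - sum_{j<=M} C(j+k,k) p_{j+k} <= (k+1) B_{k+1} / (M+1)].  So the equalities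
    [B_0 = 1] and [B_1 = 2 alpha] pass to coordinatewise limits, while the upper
    bounds do by lower semicontinuity: the set is closed, hence compact, in the
    product topology.  Finally, on probability vectors coordinatewise convergence
    implies convergence in [l^1] (Scheffé), so an [l^1]-open cover is a
    product-open cover. *)

Lemma sum_n_0 (f : nat -> R) : sum_n f 0 = f 0%nat.
Proof. exact (sum_O f). Qed.

Lemma sum_n_S (f : nat -> R) n : sum_n f (S n) = sum_n f n + f (S n).
Proof. exact (sum_Sn f n). Qed.

Lemma sum_n_minus (f g : nat -> R) n :
  sum_n f n - sum_n g n = sum_n (fun k => f k - g k) n.
Proof.
induction n as [|n IH]; [rewrite !sum_n_0 | rewrite !sum_n_S, <- IH]; ring.
Qed.

Lemma Rabs_sum_n_le (f : nat -> R) n : Rabs (sum_n f n) <= sum_n (fun k => Rabs (f k)) n.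
Proof.
induction n as [|n IH]; [rewrite !sum_n_0; lra|].
rewrite !sum_n_S. eapply Rle_trans; [apply Rabs_triang | lra].
Qed.

Lemma sum_n_le_loc (f g : nat -> R) n :
  (forall k, (k <= n)%nat -> f k <= g k) -> sum_n f n <= sum_n g n.
Proof.
induction n as [|n IH]; intros H; [rewrite !sum_n_0; auto|].
rewrite !sum_n_S. assert (IH' := IH (fun k Hk => H k ltac:(lia))).
specialize (H (S n) (le_n _)). lra.
Qed.

Lemma is_series_convex_comb (f g : nat -> R) (sf sg t s : R) :
  is_series f sf -> is_series g sg -> is_series (fun n => t * f n + s * g n) (t * sf + s * sg).
Proof.
intros Hf Hg. exact (is_series_plus _ _ _ _ (is_series_scal t _ _ Hf) (is_series_scal s _ _ Hg)).
Qed.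

Lemma is_lim_seq_inv_succ : is_lim_seq (fun n => / (INR n + 1)) 0.
Proof.
assert (H : is_lim_seq (fun n => INR n + 1) p_infty).
{ apply is_lim_seq_ext with (fun n => INR (S n)); [intros n; apply S_INR|].
  exact (proj1 (is_lim_seq_incr_1 INR p_infty) is_lim_seq_INR). }
exact (is_lim_seq_inv _ _ H ltac:(discriminate)).
Qed.

Lemma is_series_squeeze (f : nat -> R) (L C : R) :
  (forall M, L - C / (INR M + 1) <= sum_n f M <= L) -> is_series f L.
Proof.
intros H.
assert (Hlim : is_lim_seq (sum_n f) L).
{ apply (is_lim_seq_le_le (fun M => L - C / (INR M + 1)) _ (fun _ => L)); auto.
  - replace (Finite L) with (Finite (L - C * 0)) by (f_equal; ring).
    apply is_lim_seq_minus'; [apply is_lim_seq_const|].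
    exact (is_lim_seq_scal_l _ C 0 is_lim_seq_inv_succ).
  - apply is_lim_seq_const. }
exact Hlim.
Qed.

Section NonnegativeSeries.

Variable f : nat -> R.
Hypothesis f_ge0 : forall n, 0 <= f n.

Lemma sum_n_ge0 n : 0 <= sum_n f n.
Proof.
induction n as [|n IH]; [rewrite sum_n_0 | rewrite sum_n_S; specialize (f_ge0 (S n))]; auto; lra.
Qed.

Lemma sum_n_le_sum_n m n : (m <= n)%nat -> sum_n f m <= sum_n f n.
Proof.
induction 1 as [|n _ IH]; [lra|]. rewrite sum_n_S. specialize (f_ge0 (S n)). lra.
Qed.

Lemma is_lim_seq_sum_n_Lim : is_lim_seq (sum_n f) (Lim_seq (sum_n f)).
Proof. apply Lim_seq_correct, ex_lim_seq_incr. intros n. apply sum_n_le_sum_n. lia. Qed.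

Lemma sum_n_le_series (s : R) : is_series f s -> forall n, sum_n f n <= s.
Proof.
intros Hs. apply is_lim_seq_incr_compare; [exact Hs|].
intros n. apply sum_n_le_sum_n. lia.
Qed.

Lemma series_ge0 (s : R) : is_series f s -> 0 <= s.
Proof. intros Hs. eapply Rle_trans; [apply (sum_n_ge0 0) | apply (sum_n_le_series s Hs)]. Qed.

Lemma is_series_bounded_sum_n (B : R) :
  (forall n, sum_n f n <= B) -> exists s : R, is_series f s /\ s <= B.
Proof.
intros HB.
assert (Hf : ex_finite_lim_seq (sum_n f)).
{ apply (ex_finite_lim_seq_incr _ B); auto. intros n. apply sum_n_le_sum_n. lia. }
destruct Hf as [s Hs]. exists s. split; [exact Hs|].
exact (is_lim_seq_le _ (fun _ => B) s B HB Hs (is_lim_seq_const B)).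
Qed.

End NonnegativeSeries.

Lemma is_series_sub_sum_n_le (g h : nat -> R) (sg sh : R) N : (forall n, g n <= h n) ->
  is_series g sg -> is_series h sh -> sg - sum_n g N <= sh - sum_n h N.
Proof.
intros Hgh Hg Hh.
assert (H := sum_n_le_series (fun n => h n - g n) ltac:(intros n; specialize (Hgh n); lra)
  (sh - sg) (is_series_minus _ _ _ _ Hh Hg) N).
rewrite <- sum_n_minus in H. lra.
Qed.

Lemma is_series_le_shift (u v : nat -> R) (su sv c : R) M :
  (forall n, 0 <= u n) -> (forall n, 0 <= v n) -> 0 <= c ->
  (forall j, (M <= j)%nat -> u (S j) <= c * v j) ->
  is_series u su -> is_series v sv -> su <= sum_n u M + c * sv.
Proof.
intros u_ge0 v_ge0 c_ge0 Huv Hu Hv.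
assert (Hcv : forall n, 0 <= c * sum_n v n).
{ intros n. exact (Rmult_le_pos _ _ c_ge0 (sum_n_ge0 v v_ge0 n)). }
assert (Hpartial : forall n, sum_n u (S n) <= sum_n u M + c * sum_n v n).
{ induction n as [|n IH].
  - destruct (Nat.le_gt_cases 1 M) as [HM|HM].
    + assert (H := sum_n_le_sum_n u u_ge0 _ _ HM). specialize (Hcv 0%nat). lra.
    + assert (M = 0%nat) by lia; subst M. rewrite sum_n_S, !sum_n_0.
      specialize (Huv 0%nat (le_n 0)). lra.
  - destruct (Nat.le_gt_cases (S (S n)) M) as [HM|HM].
    + assert (H := sum_n_le_sum_n u u_ge0 _ _ HM). specialize (Hcv (S n)). lra.
    + rewrite (sum_n_S u (S n)), (sum_n_S v n). specialize (Huv (S n) ltac:(lia)). lra. }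
assert (Hlim := proj1 (is_lim_seq_incr_1 (sum_n u) su) Hu).
refine (is_lim_seq_le _ (fun _ => sum_n u M + c * sv) su _ _ Hlim (is_lim_seq_const _)).
intros n. specialize (Hpartial n).
assert (H := Rmult_le_compat_l c _ _ c_ge0 (sum_n_le_series v v_ge0 sv Hv n)). lra.
Qed.

Definition coords_near (p q : nat -> R) (N : nat) (eta : R) : Prop :=
  forall k, (k < N)%nat -> Rabs (q k - p k) < eta.

Definition coord_closure (S : (nat -> R) -> Prop) (p : nat -> R) : Prop :=
  forall N eta, 0 < eta -> exists q, S q /\ coords_near p q N eta.

Definition coord_continuous_at (G : (nat -> R) -> R) (p : nat -> R) : Prop :=
  forall eps, 0 < eps -> exists N eta, 0 < eta /\
    forall q, coords_near p q N eta -> Rabs (G q - G p) < eps.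

Lemma coord_closure_approx S p G (eps : R) : coord_closure S p -> coord_continuous_at G p ->
  0 < eps -> exists q, S q /\ Rabs (G q - G p) < eps.
Proof.
intros Hp HG Heps. destruct (HG eps Heps) as [N [eta [Heta Hnear]]].
destruct (Hp N eta Heta) as [q [Sq Hq]]. exists q. auto.
Qed.

Lemma coord_closure_le S p G (B : R) : coord_closure S p -> coord_continuous_at G p ->
  (forall q, S q -> G q <= B) -> G p <= B.
Proof.
intros Hp HG HB. destruct (Rle_or_lt (G p) B) as [H|H]; [exact H|].
destruct (coord_closure_approx S p G (G p - B) Hp HG ltac:(lra)) as [q [Sq Hq]].
specialize (HB q Sq). apply Rabs_def2 in Hq. lra.
Qed.

Lemma coord_closure_ge S p G (B : R) : coord_closure S p -> coord_continuous_at G p ->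
  (forall q, S q -> B <= G q) -> B <= G p.
Proof.
intros Hp HG HB. destruct (Rle_or_lt B (G p)) as [H|H]; [exact H|].
destruct (coord_closure_approx S p G (B - G p) Hp HG ltac:(lra)) as [q [Sq Hq]].
specialize (HB q Sq). apply Rabs_def2 in Hq. lra.
Qed.

Lemma coord_continuous_coord k p : coord_continuous_at (fun q => q k) p.
Proof. intros eps Heps. exists (S k), eps. split; [exact Heps|]. intros q Hq. apply Hq. lia. Qed.

Lemma coord_continuous_weighted_sum (c : nat -> R) s M p :
  coord_continuous_at (fun q => sum_n (fun j => c j * q (j + s)%nat) M) p.
Proof.
intros eps Heps.
set (A := sum_n (fun j => Rabs (c j)) M).
assert (HA : 0 <= A) by (apply sum_n_ge0; intros; apply Rabs_pos).
set (eta := eps / (A + 1)).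
exists (S (M + s)), eta. split; [apply Rdiv_lt_0_compat; lra|].
intros q Hq. rewrite sum_n_minus.
eapply Rle_lt_trans; [apply Rabs_sum_n_le|].
apply Rle_lt_trans with (sum_n (fun j => Rabs (c j) * eta) M).
- apply sum_n_le_loc. intros j Hj.
  replace (c j * q (j + s)%nat - c j * p (j + s)%nat)
    with (c j * (q (j + s)%nat - p (j + s)%nat)) by ring.
  rewrite Rabs_mult. apply Rmult_le_compat_l; [apply Rabs_pos|].
  left. apply Hq. lia.
- rewrite (sum_n_mult_r eta). change (A * eta < eps).
  replace (A * eta) with (eps * (A / (A + 1))) by (unfold eta; field; lra).
  assert (Hr : A / (A + 1) < 1) by (apply Rlt_div_l; lra).
  set (r := A / (A + 1)) in *. nra.
Qed.

Module ProductTopology.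
Import all_boot all_order all_algebra all_classical all_reals.
Import topology normedtype Rstruct Rstruct_topology.
Import ArrowAsProduct.
Local Open Scope classical_set_scope.
Local Open Scope R_scope.

(* [compact_cover] is stated for pointed spaces. *)
HB.instance Definition _ := isPointed.Build (nat -> R) (fun _ => 0).

Lemma coords_near_nbhs (p : nat -> R) N eta : 0 < eta ->
  nbhs p [set q | coords_near p q N eta].
Proof.
move=> eta_gt0; elim: N => [|N IH].
  by apply: filterS (@filterT _ (nbhs p) _) => q _ k /Nat.nlt_0_r.
have near_N : nbhs p [set q : nat -> R | Rabs (q N - p N) < eta].
  have ball_N : nbhs p (proj N @^-1` ball (p N) eta).
    by apply: (@proj_continuous nat (fun _ => R) N p); apply: nbhsx_ballx; apply/RltP.
  apply: filterS ball_N => q; rewrite /ball /= /proj -RabsE Rabs_minus_sym.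
  by move/RltP.
apply: filterS (filterI IH near_N) => q [nearq qN] k /ssrnat.ltP.
rewrite ltnS leq_eqVlt => /orP [/eqP -> //|/ssrnat.ltP]; exact: nearq.
Qed.

Lemma In_mem (T : eqType) (x : T) (s : seq T) : x \in s -> List.In x s.
Proof. by elim: s => //= y s IH; rewrite in_cons => /orP [/eqP ->|/IH]; [left|right]. Qed.

Lemma coord_closed_finite_subcover (S : (nat -> R) -> Prop) :
  (forall q, S q -> forall k, 0 <= q k <= 1) ->
  (forall p, coord_closure S p -> S p) ->
  forall (I : Type) (U : I -> (nat -> R) -> Prop),
  (forall p, S p -> exists i N eta, 0 < eta /\
     forall q, S q -> coords_near p q N eta -> U i q) ->
  exists l : list I, forall p, S p -> exists i, List.In i l /\ U i p.
Proof.
move=> S01 S_closed I U cover_S.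
have [[i0]|noI] := pselect (inhabited I); last first.
  exists nil => p Sp; have [i _] := cover_S p Sp; by case: noI.
have [sel selP] : {sel : (nat -> R) -> I & forall x, S x -> exists N eta, 0 < eta /\
    forall q, S q -> coords_near x q N eta -> U (sel x) q}.
  apply: (@choice _ _ (fun x i => S x -> exists N eta, 0 < eta /\
    forall q, S q -> coords_near x q N eta -> U i q)) => x.
  have [Sx|nSx] := pselect (S x); last by exists i0.
  by have [i Hi] := cover_S x Sx; exists i.
have S_compact : compact S.
  apply: (subclosed_compact _ (tychonoff (fun _ : nat => @segment_compact R 0 1))).
    move=> p Sp; apply: S_closed => N eta eta_gt0.
    by have [q [Sq nearq]] := Sp _ (coords_near_nbhs p N eta eta_gt0); exists q.
  move=> q Sq k /=; have [q0 q1] := S01 q Sq k.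
  by rewrite in_itv /=; apply/andP; split; apply/RleP.
pose V x := interior [set q | S q -> U (sel x) q].
have cover_V : S `<=` cover S V.
  move=> p Sp; exists p => //; have [N [eta [eta_gt0 nearU]]] := selP p Sp.
  by apply: filterS (coords_near_nbhs p N eta eta_gt0) => q nearq Sq; exact: nearU.
rewrite compact_cover in S_compact.
have [D _ coverD] := S_compact _ S V (fun x _ => @open_interior _ _) cover_V.
exists (List.map sel (finmap.enum_fset D)) => p Sp.
have [x xD Vp] := coverD p Sp.
by exists (sel x); split; [apply: List.in_map; exact: In_mem | exact: (interior_subset Vp)].
Qed.

End ProductTopology.

Lemma prob_coord_bounds q k : prob q -> 0 <= q k <= 1.
Proof.
intros [q_ge0 q_sum]. split; [apply q_ge0|].
apply Rle_trans with (sum_n q k); [|exact (sum_n_le_series q q_ge0 1 q_sum k)].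
destruct k as [|k]; [rewrite sum_n_0; lra|].
rewrite sum_n_S. assert (H := sum_n_ge0 q q_ge0 k). lra.
Qed.

(* Scheffé: past a cutoff [N0] where [p] has mass [< eps/4], [q] has little mass
   too, because both have total mass 1 and are close on [0..N0]. *)
Lemma l1ball_of_coords_near p (eps : R) : prob p -> 0 < eps ->
  exists N eta, 0 < eta /\ forall q, prob q -> coords_near p q N eta -> l1ball p eps q.
Proof.
intros [p_ge0 p_sum] Heps.
destruct (proj2 (is_lim_seq_spec (sum_n p) 1) p_sum (mkposreal (eps / 4) ltac:(lra)))
  as [N0 HN0].
assert (Hp_tail : 1 - sum_n p N0 < eps / 4).
{ specialize (HN0 N0 (le_n _)). apply Rabs_def2 in HN0. simpl in HN0. lra. }
assert (HN : 0 < INR (S N0)) by (apply lt_0_INR; lia).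
exists (S N0), (eps / (4 * INR (S N0))). split; [apply Rdiv_lt_0_compat; lra|].
intros q [q_ge0 q_sum] Hnear.
set (g := fun k => Rabs (p k - q k)).
set (h := fun k => p k + q k).
assert (Hgh : forall k, g k <= h k).
{ intros k. unfold g, h. specialize (p_ge0 k). specialize (q_ge0 k).
  apply Rabs_le. lra. }
assert (Hh : is_series h 2).
{ replace 2 with (1 + 1) by ring. exact (is_series_plus _ _ _ _ p_sum q_sum). }
destruct (is_series_bounded_sum_n g (fun k => Rabs_pos _) 2) as [s [Hs _]].
{ intros n. apply Rle_trans with (sum_n h n).
  - apply sum_n_m_le. exact Hgh.
  - apply sum_n_le_series; [|exact Hh].
    intros k. unfold h. specialize (p_ge0 k). specialize (q_ge0 k). lra. }
exists s. split; [exact Hs|].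
assert (Htail := is_series_sub_sum_n_le g h s 2 N0 Hgh Hs Hh).
assert (Hhead : sum_n g N0 <= eps / 4).
{ apply Rle_trans with (sum_n (fun _ => eps / (4 * INR (S N0))) N0).
  - apply sum_n_le_loc. intros k Hk. unfold g. rewrite Rabs_minus_sym. left. apply Hnear. lia.
  - rewrite sum_n_const. apply Req_le. field. lra. }
assert (Hdiff : sum_n p N0 - sum_n q N0 <= sum_n g N0).
{ rewrite sum_n_minus. eapply Rle_trans; [apply Rle_abs | apply Rabs_sum_n_le]. }
assert (Hsplit : sum_n h N0 = sum_n p N0 + sum_n q N0) by exact (sum_n_plus p q N0).
lra.
Qed.

Lemma l1_compact_of_coord_closed (S : (nat -> R) -> Prop) :
  (forall q, S q -> prob q) -> (forall p, coord_closure S p -> S p) -> l1_compact S.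
Proof.
intros S_prob S_closed I U U_open S_cover.
apply ProductTopology.coord_closed_finite_subcover; [|exact S_closed|].
- intros q Sq k. exact (prob_coord_bounds q k (S_prob q Sq)).
- intros p Sp. destruct (S_cover p Sp) as [i Hi].
  destruct (U_open i p Hi) as [eps [Heps Hball]].
  destruct (l1ball_of_coords_near p eps (S_prob p Sp) Heps) as [N [eta [Heta Hnear]]].
  exists i, N, eta. split; [exact Heta|].
  intros q Sq Hq. exact (Hball q (Hnear q (S_prob q Sq) Hq)).
Qed.

Definition bmoment_term (k : nat) (p : nat -> R) (j : nat) : R :=
  Binomial.C (j + k) k * p (j + k)%nat.

Lemma C_ge0 n k : 0 <= Binomial.C n k.
Proof.
unfold Binomial.C. apply Rmult_le_pos; [apply pos_INR|].
apply Rlt_le, Rinv_0_lt_compat, Rmult_lt_0_compat; apply INR_fact_lt_0.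
Qed.

Lemma bmoment_term_ge0 k p : (forall n, 0 <= p n) -> forall j, 0 <= bmoment_term k p j.
Proof. intros p_ge0 j. apply Rmult_le_pos; [apply C_ge0 | apply p_ge0]. Qed.

Lemma bmoment_term_0 p j : bmoment_term 0 p j = p j.
Proof. unfold bmoment_term. rewrite Nat.add_0_r, C_n_0. ring. Qed.

Lemma is_series_bmoment_term_0 p (s : R) : is_series (bmoment_term 0 p) s <-> is_series p s.
Proof. split; apply is_series_ext; intros j; [|symmetry]; apply bmoment_term_0. Qed.

Lemma bmoment_term_succ k p j :
  (INR j + 1) * bmoment_term k p (S j) = (INR k + 1) * bmoment_term (S k) p j.
Proof.
unfold bmoment_term. replace (S j + k)%nat with (j + S k)%nat by lia.
rewrite (Binomial.pascal_step3 (j + S k) k) by lia.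
replace (j + S k - k)%nat with (S j) by lia. rewrite !S_INR.
field. pose proof (pos_INR k). lra.
Qed.

Lemma bmoment_term_convex_comb k p q (t s : R) j :
  bmoment_term k (fun n => t * p n + s * q n) j = t * bmoment_term k p j + s * bmoment_term k q j.
Proof. unfold bmoment_term. ring. Qed.

Lemma a_of_bmoment p k :
  a_of p k = Rbar_mult (Finite (/ (INR k + 1))) (Lim_seq (sum_n (bmoment_term k p))).
Proof. reflexivity. Qed.

Lemma a_of_is_series p k (b : R) :
  is_series (bmoment_term k p) b -> a_of p k = Finite (b / (INR k + 1)).
Proof.
intros Hb. rewrite a_of_bmoment, (is_lim_seq_unique (sum_n (bmoment_term k p)) b Hb).
simpl. f_equal. unfold Rdiv. ring.
Qed.

Lemma a_of_cases p k : (forall n, 0 <= p n) ->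
  (exists b : R, is_series (bmoment_term k p) b) \/ a_of p k = p_infty.
Proof.
intros p_ge0.
assert (Hlim := is_lim_seq_sum_n_Lim _ (bmoment_term_ge0 k p p_ge0)).
destruct (Lim_seq (sum_n (bmoment_term k p))) as [b| |] eqn:E.
- left. exists b. exact Hlim.
- right. rewrite a_of_bmoment, E.
  apply is_Rbar_mult_unique, is_Rbar_mult_sym, is_Rbar_mult_p_infty_pos. simpl.
  apply Rinv_0_lt_compat. pose proof (pos_INR k). lra.
- exfalso.
  refine (is_lim_seq_le (fun _ => 0) _ 0 m_infty _ (is_lim_seq_const 0) Hlim).
  apply sum_n_ge0, bmoment_term_ge0, p_ge0.
Qed.

Definition moment_conditions (alpha delta : R) (p : nat -> R) : Prop :=
  (forall n, 0 <= p n) /\ is_series p 1 /\ is_series (bmoment_term 1 p) (2 * alpha) /\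
  forall k, (2 <= k)%nat ->
    exists b : R, is_series (bmoment_term k p) b /\ b <= (INR k + 1) * delta ^ k.

Lemma P_ad_moment_conditions alpha delta : P_ad alpha delta = moment_conditions alpha delta.
Proof.
apply functional_extensionality. intros p. apply propositional_extensionality.
split.
- intros [[p_ge0 p_sum] [_ [a1 ak]]]. split; [exact p_ge0|]. split; [exact p_sum|]. split.
  + destruct (a_of_cases p 1 p_ge0) as [[b Hb]|Hinf]; [|rewrite Hinf in a1; discriminate].
    rewrite (a_of_is_series _ _ _ Hb) in a1. injection a1 as a1. simpl in a1.
    replace (2 * alpha) with b; [exact Hb|]. rewrite <- a1. field.
  + intros k Hk. destruct (ak k Hk) as [_ ub].
    destruct (a_of_cases p k p_ge0) as [[b Hb]|Hinf]; [|rewrite Hinf in ub; contradiction].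
    exists b. split; [exact Hb|]. rewrite (a_of_is_series _ _ _ Hb) in ub. simpl in ub.
    rewrite Rmult_comm. apply Rle_div_l; [pose proof (pos_INR k); lra | exact ub].
- intros [p_ge0 [p_sum [p1 pk]]]. split; [split; assumption|]. split; [|split].
  + rewrite (a_of_is_series p 0 1 (proj2 (is_series_bmoment_term_0 p 1) p_sum)).
    f_equal. simpl. field.
  + rewrite (a_of_is_series p 1 _ p1). f_equal. simpl. field.
  + intros k Hk. destruct (pk k Hk) as [b [Hb ub]]. rewrite (a_of_is_series _ _ _ Hb). simpl.
    assert (HK : 0 < INR k + 1) by (pose proof (pos_INR k); lra).
    split.
    * apply Rdiv_le_0_compat; [exact (series_ge0 _ (bmoment_term_ge0 k p p_ge0) b Hb) | exact HK].
    * apply Rle_div_l; [exact HK|]. lra.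
Qed.

Lemma moment_conditions_convex alpha delta : convex_set (moment_conditions alpha delta).
Proof.
intros p q t [p_ge0 [p_sum [p1 pk]]] [q_ge0 [q_sum [q1 qk]]] Ht.
set (r := fun k => t * p k + (1 - t) * q k).
assert (Hr : forall k b c, is_series (bmoment_term k p) b -> is_series (bmoment_term k q) c ->
  is_series (bmoment_term k r) (t * b + (1 - t) * c)).
{ intros k b c Hb Hc.
  apply is_series_ext with (fun j => t * bmoment_term k p j + (1 - t) * bmoment_term k q j).
  - intros j. symmetry. apply bmoment_term_convex_comb.
  - apply is_series_convex_comb; assumption. }
split; [|split; [|split]].
- intros n. unfold r. specialize (p_ge0 n). specialize (q_ge0 n). nra.
- replace 1 with (t * 1 + (1 - t) * 1) by ring. apply is_series_convex_comb; assumption.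
- replace (2 * alpha) with (t * (2 * alpha) + (1 - t) * (2 * alpha)) by ring. auto.
- intros k Hk. destruct (pk k Hk) as [b [Hb ub]]. destruct (qk k Hk) as [c [Hc uc]].
  exists (t * b + (1 - t) * c). split; [auto | nra].
Qed.

Lemma bmoment_sum_n_lower q k (b b' C : R) M : (forall n, 0 <= q n) ->
  is_series (bmoment_term k q) b -> is_series (bmoment_term (S k) q) b' -> b' <= C ->
  b - (INR k + 1) * C / (INR M + 1) <= sum_n (bmoment_term k q) M.
Proof.
intros q_ge0 Hb Hb' HC.
assert (HM : 0 < INR M + 1) by (pose proof (pos_INR M); lra).
assert (HK : 0 <= INR k + 1) by (pose proof (pos_INR k); lra).
set (c := (INR k + 1) / (INR M + 1)).
assert (Hc : 0 <= c) by (apply Rdiv_le_0_compat; assumption).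
assert (HcC : (INR k + 1) * C / (INR M + 1) = c * C) by (unfold c; field; lra).
assert (Hshift : b <= sum_n (bmoment_term k q) M + c * b').
{ apply (is_series_le_shift _ _ b b' c M (bmoment_term_ge0 k q q_ge0)
    (bmoment_term_ge0 (S k) q q_ge0) Hc); [|exact Hb|exact Hb'].
  intros j Hj.
  assert (Hj1 : 0 < INR j + 1) by (pose proof (pos_INR j); lra).
  assert (HMj : INR M + 1 <= INR j + 1) by (apply Rplus_le_compat_r, le_INR, Hj).
  replace (bmoment_term k q (S j)) with ((INR k + 1) / (INR j + 1) * bmoment_term (S k) q j).
  2: { apply (Rmult_eq_reg_l (INR j + 1)); [rewrite bmoment_term_succ; field | ]; lra. }
  apply Rmult_le_compat_r; [apply bmoment_term_ge0, q_ge0|].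
  unfold c, Rdiv. apply Rmult_le_compat_l; [exact HK|]. apply Rinv_le_contravar; assumption. }
assert (HcB := Rmult_le_compat_l c _ _ Hc HC). lra.
Qed.

Lemma coord_continuous_bmoment_sum_n k M p :
  coord_continuous_at (fun q => sum_n (bmoment_term k q) M) p.
Proof. exact (coord_continuous_weighted_sum (fun j => Binomial.C (j + k) k) k M p). Qed.

Lemma coord_closure_bmoment_series A p k (b C : R) : coord_closure A p ->
  (forall q, A q -> (forall n, 0 <= q n) /\ is_series (bmoment_term k q) b /\
     exists b' : R, is_series (bmoment_term (S k) q) b' /\ b' <= C) ->
  is_series (bmoment_term k p) b.
Proof.
intros Hp HA. apply (is_series_squeeze _ b ((INR k + 1) * C)). intros M. split.
- apply (coord_closure_ge _ _ _ _ Hp (coord_continuous_bmoment_sum_n k M p)).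
  intros q Aq. destruct (HA q Aq) as [q_ge0 [Hb [b' [Hb' HC]]]].
  exact (bmoment_sum_n_lower q k b b' C M q_ge0 Hb Hb' HC).
- apply (coord_closure_le _ _ _ _ Hp (coord_continuous_bmoment_sum_n k M p)).
  intros q Aq. destruct (HA q Aq) as [q_ge0 [Hb _]].
  exact (sum_n_le_series _ (bmoment_term_ge0 k q q_ge0) b Hb M).
Qed.

Lemma moment_conditions_coord_closed alpha delta p :
  coord_closure (moment_conditions alpha delta) p -> moment_conditions alpha delta p.
Proof.
intros Hp.
assert (p_ge0 : forall n, 0 <= p n).
{ intros n. apply (coord_closure_ge _ _ _ 0 Hp (coord_continuous_coord n p)).
  intros q [q_ge0 _]. apply q_ge0. }
split; [exact p_ge0|]. split; [|split].
- apply is_series_bmoment_term_0.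
  apply (coord_closure_bmoment_series _ p 0 1 (2 * alpha) Hp).
  intros q [q_ge0 [q_sum [q1 _]]]. split; [exact q_ge0|]. split.
  + apply is_series_bmoment_term_0. exact q_sum.
  + exists (2 * alpha). split; [exact q1 | lra].
- apply (coord_closure_bmoment_series _ p 1 _ ((INR 2 + 1) * delta ^ 2) Hp).
  intros q [q_ge0 [_ [q1 qk]]]. split; [exact q_ge0|]. split; [exact q1|].
  exact (qk 2%nat (le_n 2)).
- intros k Hk. apply (is_series_bounded_sum_n _ (bmoment_term_ge0 k p p_ge0)). intros M.
  apply (coord_closure_le _ _ _ _ Hp (coord_continuous_bmoment_sum_n k M p)).
  intros q [q_ge0 [_ [_ qk]]]. destruct (qk k Hk) as [b [Hb ub]].
  eapply Rle_trans; [exact (sum_n_le_series _ (bmoment_term_ge0 k q q_ge0) _ Hb M) | exact ub].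
Qed.

Theorem proposition7 (alpha delta : R) (Ha : 0 < alpha) (Had : alpha <= delta) :
  l1_compact (P_ad alpha delta) /\ convex_set (P_ad alpha delta).
Proof.
rewrite P_ad_moment_conditions. split.
- apply l1_compact_of_coord_closed.
  + intros q [q_ge0 [q_sum _]]. split; assumption.
  + apply moment_conditions_coord_closed.
- apply moment_conditions_convex.
Qed.
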